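(* Let $\mathcal{D}\in\mathbb{C}^{\mathbf{N}(s)\times\mathbf{N}(s)}$ with $\mathrm{ind}(\mathcal{D})=k$, and let $\mathcal{B}\in\mathscr{R}(\mathcal{D}^k)$. Then $\mathcal{D}^{c,\dagger}*_s\mathcal{B}$ is the unique solution $\mathcal{Z}$ of the multilinear system $\mathcal{D}*_s\mathcal{Z}=\mathcal{B}$ lying in $\mathscr{R}(\mathcal{D}^\dagger*_s\mathcal{D}^k)$.
   Context: For positive integers $N_1,\dots,N_s$ write $\mathbf{N}(s)=N_1\times\cdots\times N_s$. For $\mathcal{A}\in\mathbb{C}^{\mathbf{I}(m)\times\mathbf{K}(p)}$ and $\mathcal{B}\in\mathbb{C}^{\mathbf{K}(p)\times\mathbf{J}(n)}$ the Einstein product is the tensor $\mathcal{A}*_p\mathcal{B}\in\mathbb{C}^{\mathbf{I}(m)\times\mathbf{J}(n)}$ with entries $(\mathcal{A}*_p\mathcal{B})_{i_1\dots i_m j_1\dots j_n}=\sum_{k_1,\dots,k_p}\mathcal{A}_{i_1\dots i_m k_1\dots k_p}\mathcal{B}_{k_1\dots k_p j_1\dots j_n}$; the case $n=0$ (so $\mathcal{B}\in\mathbb{C}^{\mathbf{K}(p)}$) is allowed. For $\mathcal{D}\in\mathbb{C}^{\mathbf{N}(s)\times\mathbf{N}(s)}$, powers are $\mathcal{D}^0=\mathcal{I}$, $\mathcal{D}^{j+1}=\mathcal{D}*_s\mathcal{D}^j$, where $\mathcal{I}$ is the identity tensor with entries $\mathcal{I}_{i_1\dots i_s j_1\dots j_s}=\prod_{t=1}^s\delta_{i_tj_t}$.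 The conjugate transpose $\mathcal{A}^*$ of $\mathcal{A}\in\mathbb{C}^{\mathbf{M}(m)\times\mathbf{N}(n)}$ has entries $(\mathcal{A}^* )_{j_1\dots j_n i_1\dots i_m}=\overline{\mathcal{A}_{i_1\dots i_m j_1\dots j_n}}$. For $\mathcal{A}\in\mathbb{C}^{\mathbf{M}(m)\times\mathbf{N}(n)}$, $\mathscr{R}(\mathcal{A})=\{\mathcal{A}*_n\mathcal{E}:\mathcal{E}\in\mathbb{C}^{\mathbf{N}(n)}\}$ and $\mathscr{N}(\mathcal{A})=\{\mathcal{F}\in\mathbb{C}^{\mathbf{N}(n)}:\mathcal{A}*_n\mathcal{F}=\mathcal{O}\}$. The index $\mathrm{ind}(\mathcal{D})$ of $\mathcal{D}\in\mathbb{C}^{\mathbf{N}(s)\times\mathbf{N}(s)}$ is the smallest nonnegative integer $k$ with $\dim\mathscr{R}(\mathcal{D}^k)=\dim\mathscr{R}(\mathcal{D}^{k+1})$. The Moore–Penrose inverse $\mathcal{D}^\dagger$ of $\mathcal{D}\in\mathbb{C}^{\mathbf{N}(s)\times\mathbf{N}(s)}$ is the unique $\mathcal{Y}$ with $\mathcal{D}*_s\mathcal{Y}*_s\mathcal{D}=\mathcal{D}$, $\mathcal{Y}*_s\mathcal{D}*_s\mathcal{Y}=\mathcal{Y}$, $(\mathcal{D}*_s\mathcal{Y})^*=\mathcal{D}*_s\mathcal{Y}$, $(\mathcal{Y}*_s\mathcal{D})^*=\mathcal{Y}*_s\mathcal{D}$. With $k=\mathrm{ind}(\mathcal{D})$,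 the Drazin inverse $\mathcal{D}^{\mathrm D}$ is the unique $\mathcal{Y}$ with $\mathcal{Y}*_s\mathcal{D}^{k+1}=\mathcal{D}^k$, $\mathcal{Y}*_s\mathcal{D}*_s\mathcal{Y}=\mathcal{Y}$, $\mathcal{D}*_s\mathcal{Y}=\mathcal{Y}*_s\mathcal{D}$. The CMP inverse is $\mathcal{D}^{c,\dagger}=\mathcal{D}^\dagger*_s\mathcal{D}*_s\mathcal{D}^{\mathrm D}*_s\mathcal{D}*_s\mathcal{D}^\dagger$. *)

From HB Require Import structures.
From mathcomp Require Import all_boot all_order all_algebra.
From mathcomp Require Import reals complex.
Set Implicit Arguments. Unset Strict Implicit. Unset Printing Implicit Defensive.
Import Order.TTheory GRing.Theory Num.Theory.
Local Open Scope ring_scope.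

Definition mindex (s : nat) (N : 'I_s -> nat) : finType :=
  {dffun forall t : 'I_s, 'I_(N t)}.

Section Tensors.
Variable R : realType.
Local Notation C := R[i].
Variable I : finType. (* I = N(s), the multi-index set *)

Definition tsq := {ffun I * I -> C}.
Definition tvec := {ffun I -> C^o}.

Definition ein (A B : tsq) : tsq :=
  [ffun ij => \sum_(k : I) A (ij.1, k) * B (k, ij.2)].
Definition einv (A : tsq) (E : tvec) : tvec :=
  [ffun i => \sum_(k : I) A (i, k) * E k].

Definition tid : tsq := [ffun ij => if ij.1 == ij.2 then 1 else 0].

Fixpoint tpow (D : tsq) (j : nat) : tsq :=
  if j is j'.+1 then ein D (tpow D j') else tid.

Definition tconj (A : tsq) : tsq := [ffun ij => (A (ij.2, ij.1))^*].

Definition trange (A : tsq) : {vspace tvec} := limg (linfun (einv A)).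

Definition is_index (D : tsq) (k : nat) : Prop :=
  \dim (trange (tpow D k)) = \dim (trange (tpow D k.+1)) /\
  (forall j, (j < k)%N -> \dim (trange (tpow D j)) <> \dim (trange (tpow D j.+1))).

Definition is_MP (D Y : tsq) : Prop :=
  [/\ ein D (ein Y D) = D, ein Y (ein D Y) = Y,
      tconj (ein D Y) = ein D Y & tconj (ein Y D) = ein Y D].

Definition is_Drazin (D : tsq) (k : nat) (Y : tsq) : Prop :=
  [/\ ein Y (tpow D k.+1) = tpow D k, ein Y (ein D Y) = Y & ein D Y = ein Y D].

Definition in_range (A : tsq) (B : tvec) : Prop := exists E : tvec, B = einv A E.

End Tensors.

(** The Drazin relations give [D D^D D^k = D^k], hence, for any inner inverse
    [X] of [D] (in particular [D^dagger]), [D X D^k = D X D D^D D^k = D D^D D^k = D^k].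
    Consequently the CMP inverse acts on [R(D^k)] as [D^dagger]: for [B = D^k E],
    [D^{c,dagger} B = D^dagger D^k E], which lies in [R(D^dagger D^k)] and solves
    [D Z = B].  Uniqueness: if [Z = D^dagger D^k F] then [D Z = D^k F], so two such
    solutions have equal [D^k F], hence equal [D^dagger D^k F].  Neither the
    index condition nor the symmetry conditions of the Moore-Penrose inverse are
    needed. *)
From HB Require Import structures.
From mathcomp Require Import all_boot all_order all_algebra.
From mathcomp Require Import reals complex.
Set Implicit Arguments. Unset Strict Implicit. Unset Printing Implicit Defensive.
Import GRing.Theory Num.Theory.
Local Open Scope ring_scope.

Section EinsteinProduct.
Variables (R : realType) (I : finType).
Local Notation T := (tsq R I).
Local Notation V := (tvec R I).

Lemma einA (A B C : T) : ein A (ein B C) = ein (ein A B) C.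
Proof.
apply/ffunP=> [[i j]]; rewrite !ffunE /=.
under eq_bigr do rewrite ffunE /= big_distrr.
rewrite exchange_big /=; apply: eq_bigr => l _.
rewrite ffunE /= big_distrl; apply: eq_bigr => m _; by rewrite mulrA.
Qed.

Lemma einvA (A B : T) (E : V) : einv A (einv B E) = einv (ein A B) E.
Proof.
apply/ffunP=> i; rewrite !ffunE /=.
under eq_bigr do rewrite ffunE /= big_distrr.
rewrite exchange_big /=; apply: eq_bigr => l _.
rewrite ffunE /= big_distrl; apply: eq_bigr => m _; by rewrite mulrA.
Qed.

Lemma drazin_tpow_fixed (D Y : T) k :
  ein Y (tpow D k.+1) = tpow D k -> ein D Y = ein Y D ->
  ein D (ein Y (tpow D k)) = tpow D k.
Proof. by move=> hYk hDY; rewrite einA hDY -einA. Qed.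

Lemma inner_inverse_tpow_fixed (D X Y : T) k :
  ein D (ein X D) = D -> ein D (ein Y (tpow D k)) = tpow D k ->
  ein D (ein X (tpow D k)) = tpow D k.
Proof.
move=> hDXD hY; rewrite -{1}hY.
by rewrite [ein X _]einA [ein D (ein _ _)]einA hDXD.
Qed.

Section RangeSolutions.
Variables (D X P : T).
Hypothesis hX : ein D (ein X P) = P.

Lemma einv_range_solution (E : V) : einv D (einv (ein X P) E) = einv P E.
Proof. by rewrite einvA einA -einA hX. Qed.

Lemma einv_range_inj (Z1 Z2 : V) :
  in_range (ein X P) Z1 -> in_range (ein X P) Z2 ->
  einv D Z1 = einv D Z2 -> Z1 = Z2.
Proof.
move=> [E1 ->] [E2 ->]; rewrite !einv_range_solution => hE.
by rewrite -!einvA hE.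
Qed.

Lemma cmp_tpow_fixed (Y : T) : ein D (ein Y P) = P ->
  ein (ein X (ein D (ein Y (ein D X)))) P = ein X P.
Proof. by move=> hY; rewrite -!einA hX hY. Qed.

End RangeSolutions.

End EinsteinProduct.

Theorem mainTheorem14 (R : realType) (s : nat) (N : 'I_s -> nat)
    (HN : forall t, (0 < N t)%N)
    (D : tsq R (mindex N)) (k : nat) (Hk : is_index D k)
    (Ddag : tsq R (mindex N)) (HMP : is_MP D Ddag)
    (DD : tsq R (mindex N)) (HDr : is_Drazin D k DD)
    (B : tvec R (mindex N)) (HB : in_range (tpow D k) B) :
  let Dcdag := ein Ddag (ein D (ein DD (ein D Ddag))) in
  let Z0 := einv Dcdag B in
  (einv D Z0 = B /\ in_range (ein Ddag (tpow D k)) Z0) /\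
  (forall Z : tvec R (mindex N),
      einv D Z = B -> in_range (ein Ddag (tpow D k)) Z -> Z = Z0).
Proof.
case: HMP => hDXD _ _ _; case: HDr => hYk _ hDY.
have hY := drazin_tpow_fixed hYk hDY.
have hX := inner_inverse_tpow_fixed hDXD hY.
case: HB => E -> Dcdag Z0.
have Z0E : Z0 = einv (ein Ddag (tpow D k)) E.
  by rewrite /Z0 einvA; congr einv; exact: cmp_tpow_fixed.
have Z0_range : in_range (ein Ddag (tpow D k)) Z0 by exists E.
have Z0_solves : einv D Z0 = einv (tpow D k) E.
  by rewrite Z0E einv_range_solution.
split=> // Z hZ hZ_range.
by apply: (einv_range_inj hX) => //; rewrite hZ Z0_solves.
Qed.
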